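(* Let $f(x)=\frac{x}{1+rx+sx^2}$. The $(n,k)$-th entry of the inverse of the Riordan array $(f'(x),f(x))$ (an element of the derivative subgroup) is $$t_{n,k}=\sum_{j=0}^{n+1}\binom{n+1}{j}\binom{j}{n-k-j}s^{\,n-k-j}r^{\,2j+k-n}.$$
   Context: A Riordan array $(g(x),f(x))$ with $g(0)\ne0$, $f(0)=0$, $f'(0)\ne0$ is the lower-triangular matrix with $(n,k)$ entry $[x^n]g(x)f(x)^k$; products correspond to $(g,f)(u,v)=(g\,u(f),v(f))$ and inverses to $(g,f)^{-1}=(1/g(\bar f),\bar f)$ with $\bar f$ the compositional inverse. The derivative subgroup consists of arrays $(f'(x),f(x))$. $\binom{j}{m}=0$ unless $0\le m\le j$. *)

From HB Require Import structures.
From mathcomp Require Import all_boot all_order all_algebra.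
Set Implicit Arguments. Unset Strict Implicit. Unset Printing Implicit Defensive.
Import Order.TTheory GRing.Theory Num.Theory.
Local Open Scope ring_scope.

Section Series.
Variable R : comNzRingType.

Definition series := nat -> R.

Definition sone : series := fun n => (n == 0%N)%:R.

Definition smul (a b : series) : series :=
  fun n => \sum_(i < n.+1) a i * b (n - i)%N.

Definition spow (a : series) (k : nat) : series := iter k (smul a) sone.

Definition sderiv (a : series) : series := fun n => a n.+1 *+ n.+1.

(* 1/(1+q) = sum_{i>=0} (-q)^i, for q with zero constant term
   (the coefficient of x^n only receives contributions from i <= n) *)
Definition sinv1 (q : series) : series :=
  fun n => \sum_(i < n.+1) spow (fun m => - q m) i n.

Definition qrs (r s : R) : series :=
  fun n => if n == 1%N then r else if n == 2%N then s else 0.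

(* f(x) = x / (1 + r x + s x^2) *)
Definition frs (r s : R) : series :=
  fun n => match n with 0 => 0 | n'.+1 => sinv1 (qrs r s) n' end.

Definition riordan (g f : series) (n k : nat) : R := smul g (spow f k) n.

Definition Mrs (r s : R) (n k : nat) : R :=
  riordan (sderiv (frs r s)) (frs r s) n k.

End Series.

Definition binz (j : nat) (m : int) : nat :=
  match m with Posz m' => 'C(j, m') | Negz _ => 0%N end.

(* the claimed entries t_{n,k}; exponents are truncated nat differences,
   which agree with the true exponents whenever the binomial factor is nonzero *)
Definition trs (R : comNzRingType) (r s : R) (n k : nat) : R :=
  \sum_(j < n.+2)
     ('C(n.+1, j) * binz j (n%:Z - k%:Z - j%:Z))%:R
       * s ^+ (n - k - j)%N * r ^+ (2 * j + k - n)%N.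

From HB Require Import structures.
From mathcomp Require Import all_boot all_order all_algebra ring zify.
Import GRing.Theory Num.Theory.

Set Implicit Arguments.
Unset Strict Implicit.
Unset Printing Implicit Defensive.
Local Open Scope ring_scope.

(* Write P = 1 + r x + s x^2, so that f = x / P.  By the binomial theorem,
   t_{n,k} = [x^(n-k)] P^(n+1), hence the (n, m) entry of T M is
   [x^n] f' f^m P^(n+1).  From f P = x and f' P^2 = P - x P' this is 0 for
   m > n, equals f'(0) P(0) = 1 for m = n, and for m = n - e < n it is
   [x^e] P^e - [x^(e-1)] P' P^(e-1), which vanishes because (P^e)' = e P' P^(e-1);
   the factor e is cancelled over Z[r][s] and the identity specialized.
   Power series are replaced by polynomials agreeing with them below x^(n+1):
   1/P by the geometric sum of -(r x + s x^2) truncated at n, so that the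
   identities above hold up to multiples of x^(n+1).  Finally M T = 1 follows
   from T M = 1 for square matrices over a commutative ring. *)

Section Agreement.
Variable R : comNzRingType.
Implicit Types (a b : series R) (p q : {poly R}).

Definition agree K a p := forall i, (i < K)%N -> a i = p`_i.

Lemma agree_le K K' a p : (K' <= K)%N -> agree K a p -> agree K' a p.
Proof. by move=> le_K'K h i iK'; apply: h; apply: leq_trans le_K'K. Qed.

Lemma agree_sone K : agree K (sone R) 1.
Proof. by move=> i _; rewrite coef1. Qed.

Lemma agree_smul K a b p q : agree K a p -> agree K b q -> agree K (smul a b) (p * q).
Proof.
move=> hap hbq i iK; rewrite coefM; apply: eq_bigr => j _.
have jK : (j < K)%N by apply: leq_ltn_trans iK; rewrite -ltnS.
have ijK : (i - j < K)%N by apply: leq_ltn_trans iK; rewrite leq_subr.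
by rewrite hap ?hbq.
Qed.

Lemma agree_spow K a p k : agree K a p -> agree K (spow a k) (p ^+ k).
Proof.
move=> hap; elim: k => [|k IHk]; first exact: agree_sone.
by rewrite exprS /spow iterS; apply: agree_smul.
Qed.

Lemma agree_sderiv K a p : agree K.+1 a p -> agree K (sderiv a) p^`().
Proof. by move=> hap i iK; rewrite coef_deriv /sderiv hap. Qed.

Lemma agree_sinv1 K a p :
  agree K a ('X * p) -> agree K (sinv1 a) (\sum_(l < K) (- ('X * p)) ^+ l).
Proof.
move=> hap i iK; rewrite /sinv1 coef_sum.
have hNa : agree i.+1 (fun m => - a m) (- ('X * p)).
  by move=> j ji; rewrite coefN hap //; apply: leq_ltn_trans iK.
under eq_bigr => l _ do rewrite (agree_spow l hNa) //.
rewrite (big_ord_widen K (fun l => ((- ('X * p)) ^+ l)`_i) iK) big_mkcond /=.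
by apply: eq_bigr => l _; case: ltnP => // il; rewrite -mulrN exprMn coefXnM il.
Qed.

End Agreement.

Lemma coefXnM_addXnM (R : nzRingType) m K (c d : {poly R}) i :
  (i < K)%N -> ('X^m * (c + 'X^K * d))`_(m + i) = c`_i.
Proof. by move=> iK; rewrite coefXnM ltnNge leq_addr addKn coefD coefXnM iK addr0. Qed.

Lemma expr1DM (R : comNzRingType) (y a : R) m :
  exists b, (1 + y * a) ^+ m = 1 + y * b.
Proof.
elim: m => [|m [b IHm]]; first by exists 0; rewrite expr0 mulr0 addr0.
by exists (b + a + y * a * b); rewrite exprSr IHm; ring.
Qed.

Lemma coef_exprS_deriv (R : idomainType) (p : {poly R}) e :
  e.+1%:R != 0 :> R -> (p ^+ e.+1)`_e.+1 = (p^`() * p ^+ e)`_e.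
Proof.
move=> e1_neq0; apply: (mulfI e1_neq0); rewrite !mulr_natl.
by rewrite -coef_deriv deriv_exp coefMn.
Qed.

Lemma coef_exprCDCX (R : comNzRingType) (a b : R) j t :
  ((a%:P + b%:P * 'X) ^+ j)`_t = (b ^+ t * a ^+ (j - t)) *+ 'C(j, t).
Proof.
rewrite exprDn coef_sum.
under eq_bigr => i _ do rewrite exprMn -!rmorphXn mulrA -rmorphM coefMn coefCM coefXn.
case: (ltnP t j.+1) => tj; last first.
  rewrite bin_small // big1 // => i _.
  by rewrite gtn_eqF ?mulr0 ?mul0rn // (leq_trans (ltn_ord i)).
rewrite (bigD1 (Ordinal tj)) //= eqxx mulr1 mulrC big1 ?addr0 // => i ne.
suff /negbTE -> : t != i by rewrite mulr0 mul0rn.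
by apply: contra ne => /eqP ti; apply/eqP/val_inj.
Qed.

Section Denominator.
Variables (R : comNzRingType) (r s : R).

Definition lin : {poly R} := r%:P + s%:P * 'X.
Definition den : {poly R} := 1 + 'X * lin.
Definition invden K : {poly R} := \sum_(l < K) (- ('X * lin)) ^+ l.
Definition fpoly K : {poly R} := 'X * invden K.

Lemma qrsE i : qrs r s i = ('X * lin)`_i.
Proof.
rewrite /qrs coefXM /lin coefD coefC coefCM coefX.
by case: i => [|[|[|i]]] //=; rewrite ?mulr0 ?mulr1 ?addr0 ?add0r.
Qed.

Lemma agree_frs K : agree K.+1 (frs r s) (fpoly K).
Proof.
move=> [|i] iK; rewrite /fpoly coefXM //=.
exact: (agree_sinv1 (fun j (_ : (j < K)%N) => qrsE j) iK).
Qed.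

Lemma den_mul_invden K : den * invden K = 1 - 'X^K * (- lin) ^+ K.
Proof.
have -> : den = - (- ('X * lin) - 1) by rewrite opprB opprK.
by rewrite mulNr -subrX1 opprB -mulrN exprMn.
Qed.

Lemma coef0_den : den`_0 = 1.
Proof. by rewrite coefD coef1 coefXM addr0. Qed.

Lemma coef0_deriv_fpoly n : ((fpoly n.+1)^`())`_0 = 1.
Proof.
have := congr1 (fun p : {poly R} => p`_0) (den_mul_invden n.+1).
rewrite coef0M coef0_den mul1r coefB coef1 coefXnM /= subr0.
by rewrite coef_deriv /fpoly coefXM.
Qed.

Lemma fpoly_mul_den_expr K m :
  exists B, (fpoly K * den) ^+ m = 'X^m * (1 + 'X^K * B).
Proof.
have [B eB] := expr1DM ('X^K) (- (- lin) ^+ K) m.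
by exists B; rewrite /fpoly -mulrA [invden K * den]mulrC den_mul_invden -mulrN exprMn eB.
Qed.

Lemma den2_deriv_fpoly n :
  exists A, den ^+ 2 * (fpoly n.+1)^`() = den - 'X * den^`() + 'X^(n.+1) * A.
Proof.
set V := (- lin) ^+ n.+1; set G := invden n.+1.
have eG : den * G = 1 - 'X^(n.+1) * V := den_mul_invden n.+1.
have eD : den^`() * G + den * G^`() = - ('X^n * (V *+ n.+1 + 'X * V^`())).
  by rewrite -derivM eG derivB derivC derivM derivXn exprS /=; ring.
exists (- den * V - den * (V *+ n.+1 + 'X * V^`()) + 'X * den^`() * V).
have -> : den ^+ 2 * (fpoly n.+1)^`()
    = den * (den * G) + 'X * (den * (den^`() * G + den * G^`()) - den^`() * (den * G)).
  by rewrite /fpoly -/G derivM derivX mul1r; ring.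
by rewrite eG eD exprS; ring.
Qed.

End Denominator.

Lemma map_den (R S : comNzRingType) (f : {rmorphism R -> S}) (r s : R) :
  map_poly f (den r s) = den (f r) (f s).
Proof.
by rewrite /den /lin rmorphD rmorph1 rmorphM rmorphD rmorphM /= !map_polyC map_polyX.
Qed.

Lemma coef_den_exprS (R : comNzRingType) (r s : R) e :
  (den r s ^+ e.+1)`_e.+1 = ((den r s)^`() * den r s ^+ e)`_e.
Proof.
pose evr := horner_morph (fun z : int => mulrC r z%:~R).
pose ev := horner_morph (fun u : {poly int} => mulrC s (evr u)).
have -> : den r s = map_poly ev (den ('X%:P) 'X).
  by rewrite map_den /= horner_morphC; congr den; symmetry; apply: horner_morphX.
rewrite -!rmorphXn deriv_map -rmorphM !coef_map; congr (ev _).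
by apply: coef_exprS_deriv; rewrite -!polyC_natr !polyC_eq0 pnatr_eq0.
Qed.

Lemma binzE n k j : (k <= n)%N ->
  binz j (n%:Z - k%:Z - j%:Z) = if (j <= n - k)%N then 'C(j, n - k - j) else 0%N.
Proof.
move=> kn; case: leqP => jt.
  by have -> : n%:Z - k%:Z - j%:Z = (n - k - j)%N%:Z by lia.
have : n%:Z - k%:Z - j%:Z < 0 by lia.
by case: (n%:Z - k%:Z - j%:Z) => // m; lia.
Qed.

Section Inverse.
Variables (R : comNzRingType) (r s : R).

Lemma trsE n k : (k <= n)%N -> trs r s n k = (den r s ^+ n.+1)`_(n - k).
Proof.
move=> kn; rewrite /den addrC exprD1n coef_sum /trs; apply: eq_bigr => j _.
rewrite coefMn exprMn coefXnM coef_exprCDCX binzE //.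
case: ltnP => [|jt]; first by rewrite muln0 mul0r mul0r mul0rn.
case: (leqP (n - k - j) j) => [tj|tj]; last first.
  by rewrite (bin_small tj) muln0 !mul0r mulr0n mul0rn.
have -> : (2 * j + k - n = j - (n - k - j))%N by lia.
by rewrite -mulrnA -mulr_natl !natrM; ring.
Qed.

Lemma trs_eq0 n k : (n < k)%N -> trs r s n k = 0.
Proof.
move=> nk; rewrite /trs big1 // => j _.
have : n%:Z - k%:Z - j%:Z < 0 by lia.
by case: (n%:Z - k%:Z - j%:Z) => [m|m] /=; [lia | rewrite muln0 mul0r mul0r].
Qed.

Lemma Mrs_coef n k m : (k < n.+1)%N ->
  Mrs r s k m = ((fpoly r s n.+1)^`() * fpoly r s n.+1 ^+ m)`_k.
Proof.
have agree_f : agree n.+2 (frs r s) (fpoly r s n.+1) by exact: agree_frs.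
have agree_fm := agree_spow m (agree_le (leqnSn _) agree_f).
by move=> kn; apply: (agree_smul (agree_sderiv agree_f) agree_fm).
Qed.

Lemma coef_lagrange n m :
  ((fpoly r s n.+1)^`() * fpoly r s n.+1 ^+ m * den r s ^+ n.+1)`_n = (n == m)%:R.
Proof.
have [nm | /subnKC <-] := ltnP n m.
  by rewrite /fpoly exprMn -!mulrA mulrCA coefXnM nm ltn_eqF.
move: (n - m)%N => e.
set K := (m + e).+1; set F := fpoly r s K; set P := den r s.
have [B eB] : exists B, (F * P) ^+ m = 'X^m * (1 + 'X^K * B).
  exact: fpoly_mul_den_expr.
case: e @K @F eB => [|d] K F eB.
  have -> : F^`() * F ^+ m * P ^+ K = 'X^m * (F^`() * P + 'X^K * (F^`() * P * B)).
    have -> : P ^+ K = P * P ^+ m by rewrite /K addn0 exprS.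
    transitivity (F^`() * P * (F * P) ^+ m).
      by rewrite [(F * P) ^+ m]exprMn; move: (F ^+ m) (P ^+ m) => Fm Pm; ring.
    by rewrite eB; move: ('X^m) ('X^K) => Xm XK; ring.
  by rewrite coefXnM_addXnM // addn0 eqxx coef0M coef0_deriv_fpoly coef0_den mulr1.
have [A eA] : exists A, P ^+ 2 * F^`() = P - 'X * P^`() + 'X^K * A.
  exact: den2_deriv_fpoly.
have -> : F^`() * F ^+ m * P ^+ K = (P ^+ 2 * F^`()) * (F * P) ^+ m * P ^+ d.
  have -> : P ^+ K = P ^+ 2 * P ^+ m * P ^+ d.
    by rewrite -!exprD /K; congr (_ ^+ _); lia.
  rewrite [(F * P) ^+ m]exprMn.
  by move: (F ^+ m) (P ^+ m) (P ^+ d) => Fm Pm Pd; ring.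
have -> : (P ^+ 2 * F^`()) * (F * P) ^+ m * P ^+ d
    = 'X^m * ((P - 'X * P^`()) * P ^+ d
              + 'X^K * (A * (1 + 'X^K * B) * P ^+ d + (P - 'X * P^`()) * B * P ^+ d)).
  by rewrite eA eB; move: ('X^m) ('X^K) (P ^+ d) => Xm XK Pd; ring.
have /negbTE -> : (m + d.+1)%N != m by lia.
rewrite coefXnM_addXnM; last by rewrite /K ltnS leq_addl.
by rewrite mulrBl coefB -mulrA coefXM -exprS coef_den_exprS subrr.
Qed.

Lemma trs_mulmx_Mrs N :
  (\matrix_(i < N, j < N) trs r s i j) *m (\matrix_(i < N, j < N) Mrs r s i j) = 1%:M.
Proof.
apply/matrixP => i j; rewrite !mxE.
under eq_bigr do rewrite !mxE.
rewrite (bigID (fun k : 'I_N => (k <= i)%N)) /= [X in _ + X]big1 ?addr0; last first.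
  by move=> k; rewrite -ltnNge => ik; rewrite trs_eq0 // mul0r.
rewrite -(big_ord_widen N (fun k => trs r s i k * Mrs r s k j) (ltn_ord i)).
rewrite -(coef_lagrange i j) coefM; apply: eq_bigr => k _.
by rewrite mulrC trsE -1?ltnS // (Mrs_coef _ (ltn_ord k)).
Qed.

End Inverse.

Theorem mainTheorem13 (R : comNzRingType) (r s : R) (N : nat) :
  (\matrix_(i < N, j < N) Mrs r s i j) *m (\matrix_(i < N, j < N) trs r s i j)
    = 1%:M
  /\
  (\matrix_(i < N, j < N) trs r s i j) *m (\matrix_(i < N, j < N) Mrs r s i j)
    = 1%:M.
Proof. by split; [apply: mulmx1C|]; apply: trs_mulmx_Mrs. Qed.
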